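(* Let $\mathcal{H}\subseteq\{-1,+1\}^{\mathbb{R}^d}$, $\sigma>0$, $\varepsilon>0$, and let $(x_1,y_1),\dots,(x_T,y_T)\in\mathbb{R}^d\times\{-1,+1\}$. Define $\mathsf{OPT}^{\sigma,\varepsilon}_{\mathrm{gauss}}=\min_{h\in\mathcal{H}}\sum_{t=1}^T\mathbb{1}\!\left[y_t\,\mathbb{E}_{z\sim\mathcal{N}(0,I_d)}[h(x_t+\sigma z)]\le\varepsilon\right]$ and $\ddot{\mathsf{OPT}}^{\sigma}_{\mathrm{gauss}}=\min_{h\in\mathcal{H}}\sum_{t=1}^T\Pr_{z\sim\mathcal{N}(0,I_d)}[h(x_t+\sigma z)\neq y_t]$. Then $$\mathsf{OPT}^{\sigma,\varepsilon}_{\mathrm{gauss}}\le 2\cdot\ddot{\mathsf{OPT}}^{\sigma}_{\mathrm{gauss}}+T\varepsilon.$$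
   Context: Functions in $\mathcal{H}$ are assumed measurable so that the expectations and probabilities are defined, and the minima are assumed to be attained (or read as infima). *)

From HB Require Import structures.
From mathcomp Require Import all_boot all_order all_algebra.
From mathcomp Require Import all_classical all_reals all_analysis.
Set Implicit Arguments. Unset Strict Implicit. Unset Printing Implicit Defensive.
Import Order.TTheory GRing.Theory Num.Theory.
Local Open Scope classical_set_scope.
Local Open Scope ring_scope.

(* R^d is represented by d.-tuple R, with the library's product sigma-algebra
   (generated by the coordinate projections). *)

Definition shift {R : realType} {d : nat} (x : d.-tuple R) (s : R)
  (z : d.-tuple R) : d.-tuple R :=
  [tuple tnth x i + s * tnth z i | i < d].

(* P is the law of z ~ N(0, I_d): the coordinates are independent standard
   normals, i.e. P is the product of d copies of N(0,1) (this determines P on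
   the product sigma-algebra). *)
Definition std_gaussian {R : realType} {d : nat}
  (P : probability (d.-tuple R) R) : Prop :=
  forall B : 'I_d -> set R, (forall i, measurable (B i)) ->
    P [set z | forall i, B i (tnth z i)] = (\prod_(i < d) normal_prob 0 1 (B i))%E.

Definition OPT_gauss {R : realType} {d T : nat}
  (P : probability (d.-tuple R) R) (H : set (d.-tuple R -> R))
  (sigma eps : R) (xs : 'I_T -> d.-tuple R) (ys : 'I_T -> R) : \bar R :=
  ereal_inf [set (\sum_(t < T)
      (if ((ys t)%:E * \int[P]_z (h (shift (xs t) sigma z))%:E <= eps%:E)%E
       then 1 else 0)%:E)%E | h in H].

Definition OPTdd_gauss {R : realType} {d T : nat}
  (P : probability (d.-tuple R) R) (H : set (d.-tuple R -> R))
  (sigma : R) (xs : 'I_T -> d.-tuple R) (ys : 'I_T -> R) : \bar R :=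
  ereal_inf [set (\sum_(t < T)
      P [set z | h (shift (xs t) sigma z) != ys t])%E | h in H].

From Pilot Require Import Defs.
From HB Require Import structures.
From mathcomp Require Import all_boot all_order all_algebra.
From mathcomp Require Import all_classical all_reals all_analysis.
From mathcomp Require Import lra.
Import Order.TTheory GRing.Theory Num.Theory.
Local Open Scope classical_set_scope.
Local Open Scope ring_scope.

(* For a {-1,+1}-valued g and a label y in {-1,+1}, the margin y E[g] equals
   1 - 2 Pr[g <> y].  Hence if the margin is at most eps then
   1 <= 2 Pr[g <> y] + eps, so the eps-margin error count of any single h is at
   most twice its expected number of mistakes plus T eps; taking infima over H
   gives the claim. *)

Lemma measurable_shift (R : realType) (d : nat) (x : d.-tuple R) (s : R) :
  measurable_fun setT (Defs.shift x s).
Proof.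
apply/measurable_fun_tnthP => i.
rewrite (_ : _ \o _ = fun z : d.-tuple R => tnth x i + s * tnth z i); last first.
  by apply: funext => z /=; rewrite /Defs.shift tnth_mktuple.
apply: measurable_realfun.measurable_funD; first exact: measurable_cst.
apply: measurable_realfun.measurable_funM; first exact: measurable_cst.
exact: measurable_tnth.
Qed.

Lemma measurable_neq_cst {d} {T : measurableType d} {R : realType} {g : T -> R} (y : R) :
  measurable_fun setT g -> measurable [set z | g z != y].
Proof.
move=> mg; have := mg measurableT _ (measurableC (measurable_set1 y)).
by rewrite setTI; congr measurable; apply/seteqP; split => z /= /eqP.
Qed.

Lemma pm1_marginE d (T : measurableType d) (R : realType) (P : probability T R)
    (g : T -> R) (y : R) :
  measurable_fun setT g -> (forall z, g z = 1 \/ g z = -1) -> (y = 1 \/ y = -1) ->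
  (y%:E * \int[P]_z (g z)%:E = (1 - 2 * fine (P [set z | g z != y]))%:E)%E.
Proof.
move=> mg g_pm1 y_pm1; set A := [set z | g z != y].
have mA : measurable A by exact: measurable_neq_cst.
set p := fine (P A); have PA : P A = p%:E by rewrite fineK ?fin_num_measure.
have gE : g = fun z => y - 2 * y * \1_A z.
  apply: funext => z; rewrite indicE; case: (boolP (z \in A)).
    rewrite inE /A /= => /eqP; case: (g_pm1 z) => ->; case: y_pm1 => -> //; lra.
  by rewrite notin_setE /A /= => /negP /negbNE /eqP ->; lra.
have int_indic : P.-integrable setT (EFin \o fun z => 2 * y * \1_A z).
  rewrite (_ : _ \o _ = fun z => (2 * y)%:E * (\1_A z)%:E)%E.
    exact/integrableZl/integrable_indic.
  by apply: funext => z; rewrite /= EFinM.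
rewrite gE integralB_EFin //; last exact: finite_measure_integrable_cst.
under [X in (_ - X)%E]eq_integral do rewrite /= EFinM.
rewrite integralZl //; last exact: integrable_indic.
rewrite integral_cst // integral_indic // setIT [X in (_ - _ * X)%E]PA.
set PT := (X in (_ * (_ * X - _))%E); have -> : PT = 1%E by exact: probability_setT.
rewrite mule1 -EFinM.
by congr EFin; case: y_pm1 => ->; lra.
Qed.

Lemma margin_indicator_le (R : realDomainType) (p eps : R) :
  0 <= p -> 0 <= eps -> (if 1 - 2 * p <= eps then 1 else 0) <= 2 * p + eps.
Proof. by move=> p0 eps0; case: ifP => margin_le; lra. Qed.

Lemma margin_error_le d (T : measurableType d) (R : realType) (P : probability T R)
    (g : T -> R) (y eps : R) :
  measurable_fun setT g -> (forall z, g z = 1 \/ g z = -1) -> (y = 1 \/ y = -1) ->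
  0 <= eps ->
  ((if (y%:E * \int[P]_z (g z)%:E <= eps%:E)%E then 1 else 0)%:E
     <= 2%:E * P [set z | g z != y] + eps%:E)%E.
Proof.
move=> mg g_pm1 y_pm1 eps0; rewrite pm1_marginE //.
have PA := fineK (fin_num_measure P _ (measurable_neq_cst y mg)).
rewrite -[X in (_ <= _ * X + _)%E]PA -EFinM -EFinD lee_fin.
by rewrite margin_indicator_le // fine_ge0.
Qed.

Lemma margin_count_le (R : realType) (d T : nat) (P : probability (d.-tuple R) R)
    (h : d.-tuple R -> R) (sigma eps : R)
    (xs : 'I_T -> d.-tuple R) (ys : 'I_T -> R) :
  measurable_fun setT h -> (forall x, h x = 1 \/ h x = -1) ->
  (forall t, ys t = 1 \/ ys t = -1) -> 0 <= eps ->
  (\sum_(t < T)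
      (if ((ys t)%:E * \int[P]_z (h (Defs.shift (xs t) sigma z))%:E <= eps%:E)%E
       then 1 else 0)%:E
   <= 2%:E * (\sum_(t < T) P [set z | h (Defs.shift (xs t) sigma z) != ys t])
      + (T%:R * eps)%:E)%E.
Proof.
move=> mh h_pm1 ys_pm1 eps0.
rewrite ge0_sume_distrr; last by move=> t _; exact: measure_ge0.
have -> : (T%:R * eps)%:E = (\sum_(t < T) eps%:E)%E.
  by rewrite sumEFin sumr_const card_ord mulr_natl.
rewrite -big_split /=; apply: lee_sum => t _.
apply: (@margin_error_le _ _ _ P (h \o Defs.shift (xs t) sigma)) => //.
- by apply: measurableT_comp => //; exact: measurable_shift.
- by move=> z; exact: h_pm1.
Qed.

Lemma ereal_inf_le_affine (R : realType) (I : Type) (S : set I) (a b : I -> \bar R)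
    (k c : R) :
  0 < k -> (forall i, S i -> (a i <= k%:E * b i + c%:E)%E) ->
  (ereal_inf [set a i | i in S] <= k%:E * ereal_inf [set b i | i in S] + c%:E)%E.
Proof.
move=> k0 le_ab; rewrite -leeBlDr // -ereal_inf_pZl // image_comp.
apply/ereal_infP => _ [i Si <-]; rewrite leeBlDr //=.
apply: le_trans _ (le_ab i Si).
by apply: ereal_inf_lbound; exists i.
Qed.

Theorem claim22 (R : realType) (d T : nat)
  (H : set (d.-tuple R -> R))
  (HH : forall h, H h -> measurable_fun setT h /\ (forall x, h x = 1 \/ h x = -1))
  (sigma eps : R) (hsigma : 0 < sigma) (heps : 0 < eps)
  (xs : 'I_T -> d.-tuple R) (ys : 'I_T -> R)
  (hys : forall t, ys t = 1 \/ ys t = -1)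
  (P : probability (d.-tuple R) R) (hP : std_gaussian P) :
  (OPT_gauss P H sigma eps xs ys
     <= 2%:E * OPTdd_gauss P H sigma xs ys + (T%:R * eps)%:E)%E.
Proof.
apply: ereal_inf_le_affine => // h /HH [mh h_pm1].
exact: margin_count_le (ltW heps).
Qed.
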